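(* Let $A,B,C$ be a bipartite LR triple over $\mathbb F$ of diameter $d$. Then $d$ is even, and for $0\le i\le d$ each of $\alpha_i,\alpha'_i,\alpha''_i,\beta_i,\beta'_i,\beta''_i$ is zero if $i$ is odd and nonzero if $i$ is even.
   Context: Let $V$ be a vector space over a field $\mathbb F$ with $\dim V=d+1$. A decomposition of $V$ is a sequence $(V_i)_{i=0}^d$ of one-dimensional subspaces with $V=\bigoplus V_i$; $X$ lowers it if $XV_i=V_{i-1}$ ($1\le i\le d$), $XV_0=0$; raises it if $XV_i=V_{i+1}$ ($0\le i\le d-1$), $XV_d=0$. An ordered pair $X,Y$ is an LR pair if some decomposition (unique, the $(X,Y)$-decomposition) is lowered by $X$ and raised by $Y$. An LR triple is $A,B,C\in\mathrm{End}(V)$ with $A,B$; $B,C$; $C,A$ LR pairs. With $E_i,E'_i,E''_i$ the projections onto the $i$-th components of the $(A,B)$-, $(B,C)$-, $(C,A)$-decompositions, the LR triple is bipartite if $\mathrm{tr}(CE_i)=\mathrm{tr}(AE'_i)=\mathrm{tr}(BE''_i)=0$ for all $0\le i\le d$. An $(X,Y)$-basis is a basis $(v_i)$ with $v_i$ in the $i$-th component of the $(X,Y)$-decomposition and $Xv_i=v_{i-1}$ ($1\le i\le d$). An upper triangular Toeplitz matrix with parameters $(\gamma_i)_{i=0}^d$ has $(i,k)$-entry $\gamma_{k-i}$ for $i\le k$ and $0$ otherwise; two bases are compatible if the transition matrix between them is upper triangular Toeplitz with diagonal $1$. The transition matrix from a $(C,B)$-basis to a compatible $(C,A)$-basis (resp.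 from an $(A,C)$-basis to a compatible $(A,B)$-basis; from a $(B,A)$-basis to a compatible $(B,C)$-basis) exists and is independent of choices; its parameters are $(\alpha_i)$ (resp. $(\alpha'_i)$; $(\alpha''_i)$), and those of its inverse are $(\beta_i)$ (resp. $(\beta'_i)$; $(\beta''_i)$). *)

(* V = 'rV[F]_(d.+1) (dim V = d+1); an endomorphism X of V is
   a square matrix acting on row vectors: X v := v *m X.  Subspaces of V are
   represented by (row spaces of) square matrices, as in mxalgebra. *)
From HB Require Import structures.
From mathcomp Require Import all_boot all_order all_algebra.
Set Implicit Arguments. Unset Strict Implicit. Unset Printing Implicit Defensive.
Import GRing.Theory.
Local Open Scope ring_scope.

Section LR.
Variables (F : fieldType) (d : nat).
Local Notation n := d.+1.

Definition is_decomposition (D : 'I_n -> 'M[F]_n) : Prop :=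
  (forall i, \rank (D i) = 1%N) /\
  mxdirect (\sum_(i < n) D i) /\ (\sum_(i < n) D i == 1%:M)%MS.

Definition lowers (X : 'M[F]_n) (D : 'I_n -> 'M[F]_n) : Prop :=
  forall i : 'I_n,
    if i == ord0 then D i *m X = 0 else (D i *m X == D (inord i.-1))%MS.

Definition raises (X : 'M[F]_n) (D : 'I_n -> 'M[F]_n) : Prop :=
  forall i : 'I_n,
    if i == ord_max then D i *m X = 0 else (D i *m X == D (inord i.+1))%MS.

Definition XY_decomposition (X Y : 'M[F]_n) (D : 'I_n -> 'M[F]_n) : Prop :=
  is_decomposition D /\ lowers X D /\ raises Y D.

Definition LR_pair (X Y : 'M[F]_n) : Prop := exists D, XY_decomposition X Y D.

Definition LR_triple (A B C : 'M[F]_n) : Prop :=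
  LR_pair A B /\ LR_pair B C /\ LR_pair C A.

Definition comp_proj (D : 'I_n -> 'M[F]_n) (i : 'I_n) : 'M[F]_n :=
  proj_mx (D i) (\sum_(j < n | j != i) D j).

Definition bipartite (A B C : 'M[F]_n) : Prop :=
  LR_triple A B C /\
  forall D D' D'', XY_decomposition A B D -> XY_decomposition B C D' ->
    XY_decomposition C A D'' ->
    forall i : 'I_n,
      \tr (comp_proj D i *m C) = 0 /\ \tr (comp_proj D' i *m A) = 0 /\
      \tr (comp_proj D'' i *m B) = 0.

(* A basis (v_i) is encoded as the matrix U with row i U = v_i.
   (X,Y)-basis: v_i lies in the i-th component of the (X,Y)-decomposition and
   X v_i = v_{i-1} (1 <= i <= d). *)
Definition XY_basis (X Y : 'M[F]_n) (U : 'M[F]_n) : Prop :=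
  U \in unitmx /\
  exists D, XY_decomposition X Y D /\
    forall i : 'I_n, (row i U <= D i)%MS /\
      (i != ord0 -> row i U *m X = row (inord i.-1) U).

(* Transition matrix S from basis U to basis W: w_j = sum_i S_{ij} u_i,
   i.e. W = S^T *m U. *)
Definition trans_mx (U W : 'M[F]_n) : 'M[F]_n := (W *m invmx U)^T.

Definition toeplitz (g : nat -> F) : 'M[F]_n :=
  \matrix_(i < n, k < n) if (i <= k)%N then g (k - i)%N else 0.

Definition compatible (U W : 'M[F]_n) : Prop :=
  exists g : nat -> F, g 0%N = 1 /\ trans_mx U W = toeplitz g.

Definition param (T : 'M[F]_n) (i : 'I_n) : F := T ord0 i.

Definition parity_pattern (T : 'M[F]_n) : Prop :=
  forall i : 'I_n, (odd i -> param T i = 0) /\ (~~ odd i -> param T i != 0).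

End LR.

From HB Require Import structures.
From mathcomp Require Import all_boot all_order all_algebra.
From mathcomp Require Import zify.
Set Implicit Arguments. Unset Strict Implicit. Unset Printing Implicit Defensive.
Import GRing.Theory.
Local Open Scope ring_scope.

(* Let U be a basis adapted to the (C,B)-decomposition and M the matrix of A in
   it.  The bipartite condition says that M has zero diagonal.  Any basis
   adapted to the (A,B)-decomposition is also raised by B, and any basis adapted
   to the (C,A)-decomposition is also lowered by C, so the transition matrices
   between these bases and U are triangular; conjugating the weighted shifts by
   which A acts on them shows that M is tridiagonal with nonzero off-diagonal
   entries.  Let x be the last row of the transition matrix from U to a basis
   adapted to the (C,A)-decomposition: A kills the last vector of that basis,
   so x M = 0, and x_d <> 0.  Column j of x M = 0 reads
   x_(j-1) M_(j-1,j) + x_(j+1) M_(j+1,j) = 0, so x_i = 0 exactly when d - i is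
   odd, and column 0 forces x_1 = 0, i.e. d even.  For compatible bases x lists
   the parameters of the Toeplitz transition matrix in reverse order.  The
   inverse parameters follow by exchanging A and B, and the other two clauses
   by rotating the triple. *)

Section LRTriples.
Variables (F : fieldType) (d : nat).
Local Notation n := d.+1.

(* [U *m Y = raise_mx r *m U] says that Y maps row i of U to [r i] times
   row i+1, and row d to 0; [lower_mx] is the lowering analogue. *)
Definition raise_mx (r : 'I_n -> F) : 'M[F]_n :=
  \matrix_(i, j) if j == i.+1 :> nat then r i else 0.
Definition lower_mx (r : 'I_n -> F) : 'M[F]_n :=
  \matrix_(i, j) if i == j.+1 :> nat then r i else 0.

Lemma mul_raise_mxE r (P : 'M[F]_n) i j :
  (raise_mx r *m P) i j = if (i < d)%N then r i * P (inord i.+1) j else 0.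
Proof.
rewrite mxE; case: ifP => hi.
  rewrite (bigD1 (inord i.+1)) //= big1 ?addr0 ?mxE ?inordK ?eqxx // => k hk.
  rewrite mxE; case: eqP => [hk'|]; last by rewrite mul0r.
  by case/eqP: hk; apply: val_inj; rewrite /= inordK // -hk'.
rewrite big1 // => k _; rewrite mxE; case: eqP => [hk'|]; last by rewrite mul0r.
by move: (ltn_ord k); rewrite hk' ltnS hi.
Qed.

Lemma mulmx_raiseE r (P : 'M[F]_n) i j :
  (P *m raise_mx r) i j =
    if (0 < j)%N then P i (inord j.-1) * r (inord j.-1) else 0.
Proof.
rewrite mxE; case: ifP => hj.
  have hj1 : (j.-1 < n)%N := leq_ltn_trans (leq_pred _) (ltn_ord _).
  rewrite (bigD1 (inord j.-1)) //= big1 ?addr0 ?mxE ?inordK ?prednK ?eqxx //;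
    try exact: ltnW (ltn_ord _).
  move=> k hk; rewrite mxE; case: eqP => [hk'|]; last by rewrite mulr0.
  by case/eqP: hk; apply: val_inj; rewrite /= hk' /= inordK.
rewrite big1 // => k _; rewrite mxE; case: eqP => [hk'|]; last by rewrite mulr0.
by move: hj; rewrite hk'.
Qed.

Lemma mul_lower_mxE r (P : 'M[F]_n) i j :
  (lower_mx r *m P) i j = if (0 < i)%N then r i * P (inord i.-1) j else 0.
Proof.
rewrite mxE; case: ifP => hi.
  have hi1 : (i.-1 < n)%N := leq_ltn_trans (leq_pred _) (ltn_ord _).
  rewrite (bigD1 (inord i.-1)) //= big1 ?addr0 ?mxE ?inordK ?prednK ?eqxx //;
    try exact: ltnW (ltn_ord _).
  move=> k hk; rewrite mxE; case: eqP => [hk'|]; last by rewrite mul0r.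
  by case/eqP: hk; apply: val_inj; rewrite /= hk' /= inordK.
rewrite big1 // => k _; rewrite mxE; case: eqP => [hk'|]; last by rewrite mul0r.
by move: hi; rewrite hk'.
Qed.

Lemma mulmx_lowerE r (P : 'M[F]_n) i j :
  (P *m lower_mx r) i j =
    if (j < d)%N then P i (inord j.+1) * r (inord j.+1) else 0.
Proof.
rewrite mxE; case: ifP => hj.
  rewrite (bigD1 (inord j.+1)) //= big1 ?addr0 ?mxE ?inordK ?eqxx // => k hk.
  rewrite mxE; case: eqP => [hk'|]; last by rewrite mulr0.
  by case/eqP: hk; apply: val_inj; rewrite /= inordK // -hk'.
rewrite big1 // => k _; rewrite mxE; case: eqP => [hk'|]; last by rewrite mulr0.
by move: (ltn_ord k); rewrite hk' ltnS hj.
Qed.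

Lemma row_raise_mx r (U : 'M[F]_n) i :
  row i (raise_mx r *m U) = if (i < d)%N then r i *: row (inord i.+1) U else 0.
Proof.
by apply/rowP => j; rewrite [LHS]mxE mul_raise_mxE; case: ifP; rewrite !mxE.
Qed.

Lemma row_lower_mx r (U : 'M[F]_n) i :
  row i (lower_mx r *m U) = if (0 < i)%N then r i *: row (inord i.-1) U else 0.
Proof.
by apply/rowP => j; rewrite [LHS]mxE mul_lower_mxE; case: ifP; rewrite !mxE.
Qed.

Lemma tr_lower_mx r :
  (lower_mx r)^T = raise_mx (fun i : 'I_n => r (inord i.+1)).
Proof.
apply/matrixP => i j; rewrite !mxE; case: eqP => // hj.
by rewrite -hj inord_val.
Qed.

Lemma tr_raise_mx r :
  (raise_mx r)^T = lower_mx (fun i : 'I_n => r (inord i.-1)).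
Proof.
apply/matrixP => i j; rewrite !mxE; case: eqP => // hi.
by rewrite hi inord_val.
Qed.

Local Notation shift := (raise_mx (fun _ : 'I_n => 1 : F)).

Lemma toeplitzE (g : nat -> F) (i j : 'I_n) :
  toeplitz d g i j = if (i <= j)%N then g (j - i)%N else 0.
Proof. by rewrite mxE. Qed.

Lemma toeplitz_rev (g : nat -> F) (i : 'I_n) :
  toeplitz d g ord0 i = toeplitz d g (rev_ord i) ord_max.
Proof. by rewrite !toeplitzE /= subSS leq_subr subn0 subKn // -ltnS. Qed.

Lemma toeplitz_shiftC (g : nat -> F) :
  toeplitz d g *m shift = shift *m toeplitz d g.
Proof.
apply/matrixP => i j; rewrite mulmx_raiseE mul_raise_mxE !toeplitzE.
case: (posnP j) => [j0|jpos].
  by rewrite j0 /=; case: ifP => // hid; rewrite inordK // mulr0.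
have hj1 : (j.-1 < n)%N := leq_ltn_trans (leq_pred _) (ltn_ord _).
case: (ltnP i d) => hid.
  by rewrite !inordK // mulr1 mul1r -[in RHS](prednK jpos) ltnS subSS.
rewrite inordK // ifF ?mul0r //; apply/negbTE; rewrite -ltnNge.
by move: (ltn_ord i) (ltn_ord j); lia.
Qed.

Lemma shiftC_toeplitz (M : 'M[F]_n) :
  M *m shift = shift *m M -> M = toeplitz d (fun k => M ord0 (inord k)).
Proof.
move=> hM; apply/matrixP => i j; rewrite toeplitzE.
have Mstep (i' j' : 'I_n) : (i' < d)%N ->
    M (inord i'.+1) j' = if (0 < j')%N then M i' (inord j'.-1) else 0.
  move=> hi'; move/matrixP: hM => /(_ i' j').
  by rewrite mulmx_raiseE mul_raise_mxE hi' mulr1 mul1r => <-.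
case: i => i hi; elim: i hi j => [|i IH] hi j.
  by rewrite leq0n subn0 inord_val; congr (M _ _); apply: val_inj.
have hi' : (i < n)%N by apply: ltnW.
have -> : Ordinal hi = inord i.+1 by apply: val_inj; rewrite /= inordK.
rewrite (Mstep (Ordinal hi')) //; case: (posnP j) => [j0|jpos].
  by rewrite j0 inordK.
rewrite IH /= !inordK //; last exact: leq_ltn_trans (leq_pred _) (ltn_ord _).
by rewrite -[in RHS](prednK jpos) ltnS subSS.
Qed.

Lemma invmx_toeplitz (g : nat -> F) : toeplitz d g \in unitmx ->
  exists h, invmx (toeplitz d g) = toeplitz d h.
Proof.
move=> hu; set T := toeplitz d g.
suff /shiftC_toeplitz hT : invmx T *m shift = shift *m invmx T.
  by exists (fun k => invmx T ord0 (inord k)).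
have e : shift = shift *m T *m invmx T by rewrite mulmxK.
by rewrite {1}e -toeplitz_shiftC !mulmxA mulVmx // mul1mx.
Qed.

Lemma trig_mul_diag (G H : 'M[F]_n) i :
  is_trig_mx G -> is_trig_mx H -> (G *m H) i i = G i i * H i i.
Proof.
move=> /is_trig_mxP hG /is_trig_mxP hH.
rewrite mxE (bigD1 i) //= big1 ?addr0 // => k hki.
case: (ltngtP i k) => [/hG->|/hH->|/val_inj hik]; rewrite ?mul0r ?mulr0 //.
by rewrite hik eqxx in hki.
Qed.

Lemma trig_inv_diag_neq0 (G H : 'M[F]_n) i :
  is_trig_mx G -> is_trig_mx H -> G *m H = 1%:M -> G i i != 0 /\ H i i != 0.
Proof.
move=> hG hH hGH; have := oner_neq0 F.
have -> : (1 : F) = G i i * H i i by rewrite -trig_mul_diag // hGH mxE eqxx.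
by rewrite mulf_eq0 negb_or => /andP.
Qed.

Lemma lower_mx_intertwine_trig (K : 'M[F]_n) f b :
  (forall i : 'I_n, (0 < i)%N -> f i != 0) ->
  K *m lower_mx f = lower_mx b *m K -> is_trig_mx K.
Proof.
move=> hf hK; have Kstep (i k : 'I_n) (hk : (0 < k)%N) : K i k =
    (if (0 < i)%N then b i * K (inord i.-1) (inord k.-1) else 0) / f k.
  apply: (canRL (mulfK (hf k hk))).
  have hk1 : (k.-1 < n)%N := leq_ltn_trans (leq_pred _) (ltn_ord _).
  move/matrixP: hK => /(_ i (inord k.-1)).
  rewrite mulmx_lowerE mul_lower_mxE !inordK // prednK // inord_val.
  by rewrite -ltnS ltn_ord.
suff K0 m (i k : 'I_n) : i = m :> nat -> (i < k)%N -> K i k = 0.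
  by apply/is_trig_mxP => i k; apply: K0.
elim: m i k => [|m IH] i k hi hik; have hk := leq_ltn_trans (leq0n i) hik.
  by rewrite Kstep // hi mul0r.
rewrite Kstep // hi /= (IH (inord m)) ?mulr0 ?mul0r ?inordK //.
all: by move: (ltn_ord i) (ltn_ord k); lia.
Qed.

Lemma raise_mx_intertwine_trig (P : 'M[F]_n) f b :
  (forall i : 'I_n, (i < d)%N -> b i != 0) ->
  P *m raise_mx f = raise_mx b *m P -> is_trig_mx P^T.
Proof.
move=> hb hP.
apply: (@lower_mx_intertwine_trig _ (fun i => b (inord i.-1))
                                     (fun i => f (inord i.-1))).
  move=> i hi; apply: hb; rewrite inordK; move: (ltn_ord i); lia.
by rewrite -!tr_raise_mx -!trmx_mul hP.
Qed.

Lemma lowered_bases_trig (X U W : 'M[F]_n) r s :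
  U \in unitmx -> (forall i : 'I_n, (0 < i)%N -> r i != 0) ->
  U *m X = lower_mx r *m U -> W *m X = lower_mx s *m W ->
  is_trig_mx (W *m invmx U).
Proof.
move=> hU hr hUX hWX; apply: (lower_mx_intertwine_trig hr).
by rewrite -[lower_mx r](mulmxK hU) -hUX !mulmxA mulmxKV // hWX.
Qed.

Lemma raised_bases_trig (Y U V : 'M[F]_n) b f :
  V \in unitmx -> (forall i : 'I_n, (i < d)%N -> b i != 0) ->
  U *m Y = raise_mx b *m U -> V *m Y = raise_mx f *m V ->
  is_trig_mx (U *m invmx V)^T.
Proof.
move=> hV hb hUY hVY; apply: (raise_mx_intertwine_trig (f := f) hb).
by rewrite -[raise_mx f](mulmxK hV) -hVY !mulmxA mulmxKV // hUY.
Qed.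

Definition unreduced_lower_hessenberg (M : 'M[F]_n) : Prop :=
  (forall i j : 'I_n, (i.+1 < j)%N -> M i j = 0) /\
  (forall i j : 'I_n, j = i.+1 :> nat -> M i j != 0).

Lemma trig_conj_raise_hessenberg (G H : 'M[F]_n) a :
  is_trig_mx G -> is_trig_mx H -> G *m H = 1%:M ->
  (forall i : 'I_n, (i < d)%N -> a i != 0) ->
  unreduced_lower_hessenberg (G *m raise_mx a *m H).
Proof.
move=> hG hH hGH ha; have /is_trig_mxP G0 := hG; have /is_trig_mxP H0 := hH.
have entry (i j : 'I_n) : (G *m raise_mx a *m H) i j = \sum_(k < n)
    (if (0 < k)%N then G i (inord k.-1) * a (inord k.-1) else 0) * H k j.
  by rewrite mxE; apply: eq_bigr => k _; rewrite mulmx_raiseE.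
split=> [i j hij | i j hji].
  rewrite entry big1 // => k _; case: (posnP k) => [_|hk]; first by rewrite mul0r.
  case: (ltnP i k.-1) => hik.
    by rewrite G0 ?mul0r ?inordK //; move: (ltn_ord k); lia.
  by rewrite H0 ?mulr0 //; lia.
rewrite entry (bigD1 j) //= big1 ?addr0.
  have [Gi _] := trig_inv_diag_neq0 i hG hH hGH.
  have [_ Hj] := trig_inv_diag_neq0 j hG hH hGH.
  by rewrite hji /= inord_val !mulf_neq0 ?ha // -ltnS -hji ltn_ord.
move=> k hkj; case: (posnP k) => [_|hk]; first by rewrite mul0r.
case: (ltngtP k j) => hjk; first by rewrite H0 ?mulr0.
  by rewrite G0 ?mul0r ?inordK //; move: (ltn_ord k); lia.
by case/eqP: hkj; apply: val_inj.
Qed.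

Definition adapted_basis (D : 'I_n -> 'M[F]_n) (U : 'M[F]_n) : Prop :=
  U \in unitmx /\ forall i, (row i U <= D i)%MS.

Lemma row_unitmx_neq0 (U : 'M[F]_n) i : U \in unitmx -> row i U != 0.
Proof.
move=> hU; apply/eqP => h0.
have : (delta_mx 0 i : 'rV[F]_n) *m U *m invmx U = 0 by rewrite -rowE h0 mul0mx.
by rewrite mulmxK // => /matrixP /(_ 0 i) /eqP; rewrite !mxE !eqxx oner_eq0.
Qed.

Lemma adapted_basis_exists D : is_decomposition D -> exists U, adapted_basis D U.
Proof.
move=> [hr [_ /andP [_ hsum]]].
have /fin_all_exists [v hv] :
    forall i, exists v : 'rV[F]_n, (v <= D i)%MS /\ v != 0.
  move=> i; have : D i != 0 by rewrite -mxrank_eq0 hr.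
  by case/rowV0Pn => v hv vn0; exists v.
exists (\matrix_i v i); split=> [|i]; last by rewrite rowK; case: (hv i).
rewrite -row_full_unit -sub1mx; apply: submx_trans hsum _.
apply/sumsmx_subP => i _; have [hvi vn0] := hv i.
have [_] := mxrank_leqif_eq hvi.
rewrite hr rank_rV vn0 eqxx => /esym /andP [_ hDv].
by apply: submx_trans hDv _; rewrite -(rowK v i) row_sub.
Qed.

Lemma adapted_row_eqmx D U i :
  is_decomposition D -> adapted_basis D U -> (row i U :=: D i)%MS.
Proof.
move=> [hr _] [hU hs]; apply/eqmxP; have [_ <-] := mxrank_leqif_eq (hs i).
by rewrite hr rank_rV row_unitmx_neq0.
Qed.

Lemma adapted_row_mul D U (X : 'M[F]_n) i j :
  is_decomposition D -> adapted_basis D U -> (D i *m X == D j)%MS ->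
  exists2 c, c != 0 & row i U *m X = c *: row j U.
Proof.
move=> hD hU hX; have eqD k := adapted_row_eqmx k hD hU.
have : (row i U *m X <= row j U)%MS by rewrite (eqmxMr _ (eqD i)) (eqmxP hX) eqD.
case/sub_rVP => c hc; exists c => //; apply: contraTneq isT => c0.
have := eqmx_rank hX; rewrite -(eqmxMr X (eqD i)) hc c0 scale0r mxrank0.
by case: hD => /(_ j) ->.
Qed.

Lemma adapted_lower X Y D U : XY_decomposition X Y D -> adapted_basis D U ->
  exists2 r, U *m X = lower_mx r *m U & forall i : 'I_n, (0 < i)%N -> r i != 0.
Proof.
move=> [hD [hX _]] hU.
have /fin_all_exists [r hr] : forall i, exists c : F,
    row i U *m X = (if (0 < i)%N then c *: row (inord i.-1) U else 0) /\
    ((0 < i)%N -> c != 0).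
  move=> i; move: (hX i); case: eqP => [-> hX0 | /eqP hi0 hXi].
    exists 0; split=> //; apply/eqP; rewrite -submx0 -hX0 submxMr //.
    by case: hU => _ /(_ ord0).
  have [c c0 hc] := adapted_row_mul hD hU hXi.
  by exists c; rewrite lt0n hi0.
exists r => [|i /(proj2 (hr i)) //].
by apply/row_matrixP => i; rewrite row_mul row_lower_mx (proj1 (hr i)).
Qed.

Lemma adapted_raise X Y D U : XY_decomposition X Y D -> adapted_basis D U ->
  exists2 r, U *m Y = raise_mx r *m U & forall i : 'I_n, (i < d)%N -> r i != 0.
Proof.
move=> [hD [_ hY]] hU.
have /fin_all_exists [r hr] : forall i, exists c : F,
    row i U *m Y = (if (i < d)%N then c *: row (inord i.+1) U else 0) /\
    ((i < d)%N -> c != 0).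
  move=> i; move: (hY i); case: eqP => [-> hY0 | /eqP hid hYi].
    exists 0; rewrite ltnn; split=> //.
    apply/eqP; rewrite -submx0 -hY0 submxMr //.
    by case: hU => _ /(_ ord_max).
  have [c c0 hc] := adapted_row_mul hD hU hYi.
  exists c; rewrite ltn_neqAle -ltnS ltn_ord andbT.
  by have -> : (i != d :> nat) by apply: contra hid => /eqP hi; apply/eqP/val_inj.
exists r => [|i /(proj2 (hr i)) //].
by apply/row_matrixP => i; rewrite row_mul row_raise_mx (proj1 (hr i)).
Qed.

Lemma XY_basis_adapted X Y U :
  XY_basis X Y U -> exists2 D, XY_decomposition X Y D & adapted_basis D U.
Proof. by case=> hU [D [hD hs]]; exists D => //; split=> // i; case: (hs i). Qed.

(* [comp_proj D i] projects along the ring sum of the [D j] with [j != i], which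
   is a complement of [D i] only if that sum has the expected row space.  This
   holds for [row_decomposition U], to which the bipartite condition will be
   applied. *)
Definition row_decomposition (U : 'M[F]_n) (i : 'I_n) : 'M[F]_n :=
  delta_mx i i *m U.

Lemma row_decompositionE (U : 'M[F]_n) i :
  (row_decomposition U i :=: row i U)%MS.
Proof.
rewrite /row_decomposition -(mul_delta_mx (0 : 'I_1)) -mulmxA -rowE.
by apply: eqmxMfull; rewrite /row_full mxrank_delta.
Qed.

Lemma row_sub_row_decomposition (U : 'M[F]_n) j k : j != k ->
  (row j U <= (\sum_(i < n | i != k) row_decomposition U i)%R)%MS.
Proof.
move=> hjk.
suff -> : row j U = row j (\sum_(i < n | i != k) row_decomposition U i).
  exact: row_sub.
rewrite [RHS]rowE mulmx_sumr (bigD1 j) //= big1 ?addr0 => [|i /andP [_ hij]].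
  by rewrite mulmxA mul_delta_mx -rowE.
by rewrite mulmxA mul_delta_mx_cond eq_sym (negbTE hij) mulr0n mul0mx.
Qed.

Lemma XY_decomposition_eqmx X Y (D D' : 'I_n -> 'M[F]_n) :
  (forall i, (D i :=: D' i)%MS) ->
  XY_decomposition X Y D -> XY_decomposition X Y D'.
Proof.
move=> eqD [[hr [hdir hs]] [hX hY]].
have eS : (\sum_i D i :=: \sum_i D' i)%MS by apply: eqmx_sums => i _; apply: eqD.
have step0 (Z : 'M[F]_n) i : D i *m Z = 0 -> D' i *m Z = 0.
  by move=> h; apply/eqP; rewrite -submx0 -(eqmxMr Z (eqD i)) h.
have step1 (Z : 'M[F]_n) i k : (D i *m Z == D k)%MS -> (D' i *m Z == D' k)%MS.
  move=> /eqmxP h; apply/eqmxP.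
  exact: eqmx_trans (eqmx_sym (eqmxMr Z (eqD i))) (eqmx_trans h (eqD k)).
split; [split; [|split] | split].
- by move=> i; rewrite -(eqD i).
- have eR : (\sum_i \rank (D' i) = \sum_i \rank (D i))%N.
    by apply: eq_bigr => i _; rewrite eqD.
  by move: hdir; rewrite !mxdirectE /= -eS eR.
- by apply/eqmxP; apply: eqmx_trans (eqmx_sym eS) (eqmxP hs).
- by move=> i; move: (hX i); case: ifP => _; [apply: step0 | apply: step1].
- by move=> i; move: (hY i); case: ifP => _; [apply: step0 | apply: step1].
Qed.

Lemma adapted_row_decomposition X Y D (U : 'M[F]_n) :
  XY_decomposition X Y D -> adapted_basis D U ->
  XY_decomposition X Y (row_decomposition U).
Proof.
move=> hD hU; have hDU i := adapted_row_eqmx i (proj1 hD) hU.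
apply: XY_decomposition_eqmx hD => i.
exact: eqmx_trans (eqmx_sym (hDU i)) (eqmx_sym (row_decompositionE U i)).
Qed.

Lemma comp_proj_row_decomposition (U : 'M[F]_n) k :
  U \in unitmx -> is_decomposition (row_decomposition U) ->
  comp_proj (row_decomposition U) k = invmx U *m delta_mx k k *m U.
Proof.
move=> hU [_ [hdir _]].
have cap : (row_decomposition U k :&:
            (\sum_(j < n | j != k) row_decomposition U j)%R = 0)%MS.
  apply/eqP; rewrite -submx0 -[X in (_ <= X)%MS](mxdirect_sumsP hdir k isT).
  by rewrite capmxS // summx_sub_sums.
rewrite -mulmxA; apply: (canRL (mulKmx hU)).
apply/row_matrixP => j; rewrite row_mul [RHS]rowE [RHS]mulmxA mul_delta_mx_cond.
rewrite /comp_proj; case: eqP => [->|/eqP hjk].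
  by rewrite mulr1n -rowE proj_mx_id // row_decompositionE.
by rewrite mulr0n mul0mx proj_mx_0 // row_sub_row_decomposition.
Qed.

Lemma trace_comp_proj_row_decomposition (U A : 'M[F]_n) k :
  U \in unitmx -> is_decomposition (row_decomposition U) ->
  \tr (comp_proj (row_decomposition U) k *m A) = (U *m A *m invmx U) k k.
Proof.
move=> hU hD.
rewrite comp_proj_row_decomposition // -!mulmxA mxtrace_mulC -!mulmxA.
rewrite -(mul_delta_mx (0 : 'I_1)) -mulmxA mxtrace_mulC -mulmxA.
by rewrite -colE -rowE trace_mx11 !mxE.
Qed.

Lemma comp_proj_rev (D : 'I_n -> 'M[F]_n) i :
  comp_proj (fun j => D (rev_ord j)) i = comp_proj D (rev_ord i).
Proof.
rewrite /comp_proj; congr proj_mx; rewrite [RHS](reindex_inj rev_ord_inj) /=.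
by apply: eq_bigl => j; rewrite (inj_eq rev_ord_inj).
Qed.

Lemma XY_decomposition_rev X Y (D : 'I_n -> 'M[F]_n) :
  XY_decomposition X Y D -> XY_decomposition Y X (fun i => D (rev_ord i)).
Proof.
move=> [[hr [hdir hs]] [hX hY]].
have eS : (\sum_(i < n) D (rev_ord i))%MS = (\sum_(i < n) D i)%MS.
  by rewrite [RHS](reindex_inj rev_ord_inj).
have rev0 : (rev_ord (ord0 : 'I_n) = ord_max) by apply: val_inj; rewrite /= subn1.
split; [split; [by [] | split] | split].
- move: hdir; rewrite !mxdirectE /= eS => /eqP ->; apply/eqP.
  by rewrite [LHS](reindex_inj rev_ord_inj).
- by move: hs; rewrite (reindex_inj rev_ord_inj).
- move=> i; move: (hY (rev_ord i)); rewrite -rev0 (inj_eq rev_ord_inj).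
  case: eqP => // /eqP hi0.
  suff -> : rev_ord (inord i.-1) = inord (rev_ord i).+1 :> 'I_n by [].
  apply: val_inj; have hi := ltn_ord i; have hi' : i != 0%N :> nat by [].
  by rewrite /= !inordK; lia.
- move=> i; move: (hX (rev_ord i)).
  rewrite -[ord0](rev_ordK) rev0 (inj_eq rev_ord_inj).
  case: eqP => // /eqP him.
  suff -> : rev_ord (inord i.+1) = inord (rev_ord i).-1 :> 'I_n by [].
  apply: val_inj; have hi := ltn_ord i.
  have hi' : i != d :> nat by apply: contra him => /eqP h; apply/eqP/val_inj.
  by rewrite /= !inordK; lia.
Qed.

Lemma bipartite_rot (A B C : 'M[F]_n) : bipartite A B C -> bipartite B C A.
Proof.
move=> [[pAB [pBC pCA]] htr]; split=> [|D1 D2 D3 h1 h2 h3 i]; first by [].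
by have [t1 [t2 t3]] := htr D3 D1 D2 h3 h1 h2 i.
Qed.

Lemma bipartite_swap (A B C : 'M[F]_n) : bipartite A B C -> bipartite B A C.
Proof.
move=> [[[D hD] [[D' hD'] [D'' hD'']]] htr]; split.
  by split; [|split]; eexists; apply: XY_decomposition_rev; eassumption.
move=> D1 D2 D3 h1 h2 h3 i.
have [t1 [t2 t3]] := htr _ _ _ (XY_decomposition_rev h1)
  (XY_decomposition_rev h3) (XY_decomposition_rev h2) (rev_ord i).
by rewrite !comp_proj_rev !rev_ordK in t1 t2 t3.
Qed.

Lemma hollow_tridiag_left_kernel (M : 'M[F]_n) (x : 'rV[F]_n) :
  unreduced_lower_hessenberg M -> unreduced_lower_hessenberg M^T ->
  (forall i, M i i = 0) -> x *m M = 0 -> x 0 ord_max != 0 ->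
  ~~ odd d /\ forall i : 'I_n, (x 0 i == 0) = odd (d - i).
Proof.
move=> [Mup Mup0] [Mlo Mlo0] Mdiag hx hxd.
have Msub (i j : 'I_n) : i = j.+1 :> nat -> M i j != 0.
  by move=> hij; have := Mlo0 j i hij; rewrite mxE.
have M0 (i j : 'I_n) : i.+1 != j :> nat -> j.+1 != i :> nat -> M i j = 0.
  move=> hij hji; case: (ltngtP i j) => h.
  - by apply: Mup; rewrite ltn_neqAle hij h.
  - by have := Mlo j i; rewrite mxE; apply; rewrite ltn_neqAle hji h.
  - by rewrite (val_inj h) Mdiag.
have col j : \sum_i x 0 i * M i j = 0.
  by move/matrixP: hx => /(_ 0 j); rewrite !mxE.
have lone (i j : 'I_n) : M i j != 0 -> (forall l : 'I_n, l != i -> M l j = 0) ->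
    x 0 i = 0.
  move=> hij hl; have := col j.
  rewrite (bigD1 i) //= big1 ?addr0 => [/eqP|l /hl->].
    by rewrite mulf_eq0 (negbTE hij) orbF => /eqP.
  by rewrite mulr0.
have step (i j k : 'I_n) : j = i.+1 :> nat -> k = j.+1 :> nat ->
    (x 0 i == 0) = (x 0 k == 0).
  move=> hji hkj.
  have hki : k != i by apply/eqP => e; move: hkj; rewrite e hji; lia.
  have := col j; rewrite (bigD1 i) // (bigD1 k) /=; last by rewrite hki.
  rewrite big1 ?addr0 => [/eqP|l /andP [hli hlk]]; last first.
    rewrite M0 ?mulr0 //; apply/eqP => e.
      by case/eqP: hli; apply: ord_inj; move: e; rewrite hji; lia.
    by case/eqP: hlk; apply: ord_inj; rewrite hkj e.
  rewrite addr_eq0 => /eqP e.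
  have -> : (x 0 i == 0) = (x 0 i * M i j == 0).
    by rewrite mulf_eq0 (negbTE (Mup0 i j hji)) orbF.
  by rewrite e oppr_eq0 mulf_eq0 (negbTE (Msub k j hkj)) orbF.
have top (i : 'I_n) : i.+1 = d -> x 0 i = 0.
  move=> hid; apply: (lone i ord_max); first exact: Mup0.
  move=> l hli; apply: M0 => /=; last by move: (ltn_ord l); lia.
  by apply: contra hli => /eqP e; apply/eqP/ord_inj; lia.
have bottom (i : 'I_n) : i = 1%N :> nat -> x 0 i = 0.
  move=> hi1; apply: (lone i ord0); first exact: Msub.
  move=> l hli; apply: M0 => //=.
  by apply: contra hli => /eqP e; apply/eqP/ord_inj; lia.
have parity k : (k <= d)%N ->
    forall i : 'I_n, (i + k)%N = d -> (x 0 i == 0) = odd k.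
  elim/ltn_ind: k => -[|[|k]] IH hk i hik.
  - have -> : i = ord_max by apply: ord_inj => /=; lia.
    exact: negbTE hxd.
  - by rewrite top ?eqxx //; lia.
  have hi2 : (i.+2 < n)%N by lia.
  rewrite (step i (inord i.+1) (inord i.+2)) ?inordK //; try lia.
  have hk' : ((inord i.+2 : 'I_n) + k)%N = d by rewrite inordK //; lia.
  by rewrite (IH k _ _ _ hk') /= ?negbK //; lia.
split=> [|i]; last by apply: parity; rewrite ?leq_subr ?subnKC // -ltnS.
case: (posnP d) => [-> // | dpos].
have := parity (d - 1)%N (leq_subr _ _) (inord 1).
rewrite bottom ?inordK ?eqxx //.
by move: dpos; case: (d) => // d' _; rewrite subn1 /= => <-.
Qed.

Lemma mulmx_invmx_unit (U W : 'M[F]_n) : U \in unitmx -> W \in unitmx ->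
  (U *m invmx W) *m (W *m invmx U) = 1%:M.
Proof. by move=> hU hW; rewrite mulmxA mulmxKV // mulmxV. Qed.

Section LoweredBases.
Variables (X U W : 'M[F]_n) (r s : 'I_n -> F).
Hypotheses (hU : U \in unitmx) (hW : W \in unitmx).
Hypotheses (hr : forall i : 'I_n, (0 < i)%N -> r i != 0)
           (hs : forall i : 'I_n, (0 < i)%N -> s i != 0).
Hypotheses (hUX : U *m X = lower_mx r *m U) (hWX : W *m X = lower_mx s *m W).

Lemma lowered_bases_diag i : (W *m invmx U) i i != 0.
Proof.
have hK := lowered_bases_trig hU hr hUX hWX.
have hK' := lowered_bases_trig hW hs hWX hUX.
by case: (trig_inv_diag_neq0 i hK' hK (mulmx_invmx_unit hU hW)).
Qed.

Lemma lowered_bases_conj_hessenberg (Z : 'M[F]_n) a :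
  (forall i : 'I_n, (i < d)%N -> a i != 0) -> W *m Z = raise_mx a *m W ->
  unreduced_lower_hessenberg (U *m Z *m invmx U).
Proof.
move=> ha hWZ; have hK := lowered_bases_trig hU hr hUX hWX.
have hK' := lowered_bases_trig hW hs hWX hUX.
have -> : U *m Z *m invmx U = U *m invmx W *m raise_mx a *m (W *m invmx U).
  by rewrite !mulmxA -(mulmxA _ (raise_mx a)) -hWZ mulmxA mulmxKV.
exact: trig_conj_raise_hessenberg hK' hK (mulmx_invmx_unit hU hW) ha.
Qed.

End LoweredBases.

Lemma raised_bases_conj_hessenberg (Y Z U V : 'M[F]_n) b f l :
  U \in unitmx -> V \in unitmx ->
  (forall i : 'I_n, (i < d)%N -> b i != 0) ->
  (forall i : 'I_n, (i < d)%N -> f i != 0) ->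
  (forall i : 'I_n, (0 < i)%N -> l i != 0) ->
  U *m Y = raise_mx b *m U -> V *m Y = raise_mx f *m V ->
  V *m Z = lower_mx l *m V ->
  unreduced_lower_hessenberg (U *m Z *m invmx U)^T.
Proof.
move=> hU hV hb hf hl hUY hVY hVZ.
have hP := raised_bases_trig hV hb hUY hVY.
have hP' := raised_bases_trig hU hf hVY hUY.
have -> : (U *m Z *m invmx U)^T =
    (V *m invmx U)^T *m raise_mx (fun i => l (inord i.+1)) *m (U *m invmx V)^T.
  rewrite -tr_lower_mx -!trmx_mul; congr trmx.
  by rewrite !mulmxA -(mulmxA _ (lower_mx l)) -hVZ mulmxA mulmxKV.
apply: trig_conj_raise_hessenberg hP' hP _ _.
  by rewrite -trmx_mul mulmx_invmx_unit // trmx1.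
by move=> i hi; apply: hl; rewrite inordK.
Qed.

Lemma bipartite_conj_diag (A B C : 'M[F]_n) DU U k :
  bipartite A B C -> XY_decomposition C B DU -> adapted_basis DU U ->
  (U *m A *m invmx U) k k = 0.
Proof.
move=> [[[D hD] [_ [D'' hD'']]] htr] hDU hU.
have hR := adapted_row_decomposition hDU hU.
have [_ [tr0 _]] := htr D _ D'' hD (XY_decomposition_rev hR) hD'' (rev_ord k).
have [hUu _] := hU.
rewrite comp_proj_rev rev_ordK in tr0.
by rewrite -(trace_comp_proj_row_decomposition _ _ hUu (proj1 hR)).
Qed.

Lemma bipartite_adapted_parity (A B C : 'M[F]_n) DU DW U W :
  bipartite A B C -> XY_decomposition C B DU -> XY_decomposition C A DW ->
  adapted_basis DU U -> adapted_basis DW W ->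
  ~~ odd d /\ forall i, ((W *m invmx U) ord_max i == 0) = odd (d - i).
Proof.
move=> hbip hDU hDW hU hW; have [hUu _] := hU; have [hWu _] := hW.
have [[[D hD] _] _] := hbip; have [V hV] := adapted_basis_exists (proj1 hD).
have [r hUC hr] := adapted_lower hDU hU; have [b hUB hb] := adapted_raise hDU hU.
have [s hWC hs] := adapted_lower hDW hW; have [a hWA ha] := adapted_raise hDW hW.
have [l hVA hl] := adapted_lower hD hV; have [f hVB hf] := adapted_raise hD hV.
suff [hd hx] : ~~ odd d /\
    forall i, (row ord_max (W *m invmx U) 0 i == 0) = odd (d - i).
  by split=> // i; rewrite -hx [in RHS]mxE.
apply: hollow_tridiag_left_kernel.
- exact: lowered_bases_conj_hessenberg hUu hWu hr hs hUC hWC _ _ ha hWA.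
- exact: raised_bases_conj_hessenberg hUu (proj1 hV) hb hf hl hUB hVB hVA.
- by move=> k; apply: bipartite_conj_diag hbip hDU hU.
- (* A kills the last row of W, expressed in the basis U by the last row of
     [W *m invmx U]. *)
  by rewrite -row_mul !mulmxA mulmxKV // hWA -mulmxA row_raise_mx ltnn.
- by rewrite mxE; apply: lowered_bases_diag hUu hWu hr hs hUC hWC ord_max.
Qed.

Lemma bipartite_diameter_even (A B C : 'M[F]_n) : bipartite A B C -> ~~ odd d.
Proof.
move=> hbip; have [[_ [[D' hD'] [D'' hD'']]] _] := hbip.
have hDU := XY_decomposition_rev hD'.
have [U hU] := adapted_basis_exists (proj1 hDU).
have [W hW] := adapted_basis_exists (proj1 hD'').
exact: (bipartite_adapted_parity hbip hDU hD'' hU hW).1.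
Qed.

Lemma bipartite_toeplitz_parity (A B C U W : 'M[F]_n) :
  bipartite A B C -> XY_basis C B U -> XY_basis C A W ->
  (exists g, trans_mx U W = toeplitz d g) -> parity_pattern (trans_mx U W).
Proof.
move=> hbip /XY_basis_adapted [DU hDU hU] /XY_basis_adapted [DW hDW hW].
move=> [g hg] i.
have [_ hpar] := bipartite_adapted_parity hbip hDU hDW hU hW.
have hz : (param (trans_mx U W) i == 0) = odd i.
  by rewrite /param hg toeplitz_rev -hg mxE hpar /= subSS subKn // -ltnS.
by split=> [hi|]; [apply/eqP; rewrite hz | rewrite hz].
Qed.

Lemma trans_mx_inv (U W : 'M[F]_n) : U \in unitmx -> W \in unitmx ->
  trans_mx W U = invmx (trans_mx U W).
Proof.
move=> hU hW; rewrite /trans_mx -trmx_inv; congr trmx.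
rewrite -[RHS]mul1mx -(mulmx_invmx_unit hU hW) -(mulmxA (U *m invmx W)).
by rewrite mulmxV ?mulmx1 // unitmx_mul hW unitmx_inv.
Qed.

Lemma bipartite_compatible_parity (A B C U W : 'M[F]_n) :
  bipartite A B C -> XY_basis C B U -> XY_basis C A W -> compatible U W ->
  parity_pattern (trans_mx U W) /\ parity_pattern (invmx (trans_mx U W)).
Proof.
move=> hbip hU hW [g [_ hg]]; have [hUu _] := hU; have [hWu _] := hW.
split; first by apply: bipartite_toeplitz_parity hbip hU hW _; exists g.
rewrite -trans_mx_inv //.
apply: bipartite_toeplitz_parity (bipartite_swap hbip) hW hU _.
rewrite trans_mx_inv // hg; apply: invmx_toeplitz.
by rewrite -hg unitmx_tr unitmx_mul hWu unitmx_inv.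
Qed.

End LRTriples.

Unset Implicit Arguments.

Theorem lemma16p6 (F : fieldType) (d : nat) (A B C : 'M[F]_d.+1) :
  bipartite A B C ->
  ~~ odd d /\
  (forall U W, XY_basis C B U -> XY_basis C A W -> compatible U W ->
     parity_pattern (trans_mx U W) /\ parity_pattern (invmx (trans_mx U W))) /\
  (forall U W, XY_basis A C U -> XY_basis A B W -> compatible U W ->
     parity_pattern (trans_mx U W) /\ parity_pattern (invmx (trans_mx U W))) /\
  (forall U W, XY_basis B A U -> XY_basis B C W -> compatible U W ->
     parity_pattern (trans_mx U W) /\ parity_pattern (invmx (trans_mx U W))).
Proof.
move=> hABC; have hBCA := bipartite_rot hABC; have hCAB := bipartite_rot hBCA.
split; first exact: bipartite_diameter_even hABC.
split; first by move=> U W; apply: bipartite_compatible_parity hABC.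
by split=> U W; [apply: bipartite_compatible_parity hBCA |
                 apply: bipartite_compatible_parity hCAB].
Qed.
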